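(* Let $(D,\prec_\perp,\succ_\perp,\prec_\vdash,\prec_\dashv,\succ_\vdash,\succ_\dashv,\alpha)$ be a Hom-six-dendriform algebra. Define $x\perp y=x\prec_\perp y+x\succ_\perp y$, $x\vdash y=x\prec_\vdash y+x\succ_\vdash y$, $x\dashv y=x\prec_\dashv y+x\succ_\dashv y$ for all $x,y\in D$. Then $(D,\perp,\vdash,\dashv,\alpha)$ is a Hom-triassociative algebra.
   Context: All vector spaces are over a field of characteristic zero. A Hom-dendriform algebra is $(D,\prec,\succ,\alpha)$ with $\prec,\succ$ bilinear on $D$ and $\alpha$ linear such that for all $x,y,z$: $\alpha(x)\prec(y\prec z+y\succ z)=(x\prec y)\prec\alpha(z)$; $\alpha(x)\succ(y\prec z)=(x\succ y)\prec\alpha(z)$; $\alpha(x)\succ(y\succ z)=(x\prec y+x\succ y)\succ\alpha(z)$. A Hom-quadri-dendriform algebra is $(D,\prec_\vdash,\prec_\dashv,\succ_\vdash,\succ_\dashv,\alpha)$ with four bilinear operations and $\alpha$ linear such that for all $x,y,z$: (Q1) $(x\prec_\vdash y)\prec_\vdash\alpha(z)=(x\prec_\dashv y)\prec_\vdash\alpha(z)=\alpha(x)\prec_\vdash(y\prec_\vdash z+y\succ_\vdash z)$; (Q2) $(x\succ_\vdash y)\prec_\vdash\alpha(z)=(x\succ_\dashv y)\prec_\vdash\alpha(z)=\alpha(x)\succ_\vdash(y\prec_\vdash z)$; (Q3) $\alpha(x)\succ_\vdash(y\succ_\vdash z)=(x\prec_\vdash y+x\succ_\vdash y)\succ_\vdash\alpha(z)=(x\prec_\dashv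 y+x\succ_\dashv y)\succ_\vdash\alpha(z)$; (Q4) $\alpha(x)\succ_\vdash(y\succ_\vdash z)=(x\prec_\dashv y+x\succ_\vdash y)\succ_\vdash\alpha(z)=(x\prec_\vdash y+x\succ_\dashv y)\succ_\vdash\alpha(z)$; (Q5) $(x\prec_\vdash y)\prec_\dashv\alpha(z)=\alpha(x)\prec_\vdash(y\prec_\dashv z+y\succ_\dashv z)$; (Q6) $(x\succ_\vdash y)\prec_\dashv\alpha(z)=\alpha(x)\succ_\vdash(y\prec_\dashv z)$; (Q7) $\alpha(x)\succ_\vdash(y\succ_\dashv z)=(x\prec_\vdash y+x\succ_\vdash y)\succ_\dashv\alpha(z)$; (Q8) $(x\prec_\dashv y)\prec_\dashv\alpha(z)=\alpha(x)\prec_\dashv(y\prec_\vdash z+y\succ_\vdash z)=\alpha(x)\prec_\dashv(y\prec_\dashv z+y\succ_\dashv z)$; (Q9) $(x\prec_\dashv y)\prec_\dashv\alpha(z)=\alpha(x)\prec_\dashv(y\prec_\vdash z+y\succ_\dashv z)=\alpha(x)\prec_\dashv(y\prec_\dashv z+y\succ_\vdash z)$; (Q10) $(x\succ_\dashv y)\prec_\dashv\alpha(z)=\alpha(x)\succ_\dashv(y\prec_\vdash z)=\alpha(x)\succ_\dashv(y\prec_\dashv z)$; (Q11) $\alpha(x)\succ_\dashv(y\succ_\vdash z)=\alpha(x)\succ_\dashv(y\succ_\dashv z)=(x\prec_\dashv y+x\succ_\dashv y)\succ_\dashv\alpha(z)$. A Hom-six-dendriform algebra is a tuple $(D,\prec_\perp,\succ_\perp,\prec_\vdash,\prec_\dashv,\succ_\vdash,\succ_\dashv,\alpha)$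 such that $(D,\prec_\perp,\succ_\perp,\alpha)$ is a Hom-dendriform algebra, $(D,\prec_\vdash,\prec_\dashv,\succ_\vdash,\succ_\dashv,\alpha)$ is a Hom-quadri-dendriform algebra, and for all $x,y,z\in D$: (S1) $(x\prec_\vdash y)\prec_\perp\alpha(z)=\alpha(x)\prec_\vdash(y\prec_\perp z+y\succ_\perp z)$; (S2) $(x\succ_\vdash y)\prec_\perp\alpha(z)=\alpha(x)\succ_\vdash(y\prec_\perp z)$; (S3) $\alpha(x)\succ_\vdash(y\succ_\perp z)=(x\prec_\vdash y+x\succ_\vdash y)\succ_\perp\alpha(z)$; (S4) $(x\prec_\dashv y)\prec_\perp\alpha(z)=\alpha(x)\prec_\perp(y\prec_\vdash z+y\succ_\vdash z)$; (S5) $(x\succ_\dashv y)\prec_\perp\alpha(z)=\alpha(x)\succ_\perp(y\prec_\vdash z)$; (S6) $\alpha(x)\succ_\perp(y\succ_\vdash z)=(x\prec_\dashv y+x\succ_\dashv y)\succ_\perp\alpha(z)$; (S7) $(x\prec_\perp y)\prec_\dashv\alpha(z)=\alpha(x)\prec_\perp(y\prec_\dashv z+y\succ_\dashv z)$; (S8) $(x\succ_\perp y)\prec_\dashv\alpha(z)=\alpha(x)\succ_\perp(y\prec_\dashv z)$; (S9) $\alpha(x)\succ_\perp(y\succ_\dashv z)=(x\prec_\perp y+x\succ_\perp y)\succ_\dashv\alpha(z)$; (S10) $(x\prec_\perp y)\prec_\vdash\alpha(z)=(x\prec_\vdash y)\prec_\vdash\alpha(z)=(x\prec_\dashv y)\prec_\vdash\alpha(z)$;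 (S11) $(x\succ_\perp y)\prec_\vdash\alpha(z)=(x\succ_\vdash y)\prec_\vdash\alpha(z)=(x\succ_\dashv y)\prec_\vdash\alpha(z)$; (S12) $(x\prec_\perp y)\succ_\vdash\alpha(z)=(x\prec_\vdash y)\succ_\vdash\alpha(z)=(x\prec_\dashv y)\succ_\vdash\alpha(z)$; (S13) $(x\succ_\perp y)\succ_\vdash\alpha(z)=(x\succ_\vdash y)\succ_\vdash\alpha(z)=(x\succ_\dashv y)\succ_\vdash\alpha(z)$; (S14) $\alpha(x)\prec_\dashv(y\prec_\perp z)=\alpha(x)\prec_\dashv(y\prec_\vdash z)=\alpha(x)\prec_\dashv(y\prec_\dashv z)$; (S15) $\alpha(x)\succ_\dashv(y\prec_\perp z)=\alpha(x)\succ_\dashv(y\prec_\vdash z)=\alpha(x)\succ_\dashv(y\prec_\dashv z)$; (S16) $\alpha(x)\succ_\dashv(y\succ_\perp z)=\alpha(x)\succ_\dashv(y\succ_\vdash z)=\alpha(x)\succ_\dashv(y\succ_\dashv z)$; (S17) $\alpha(x)\prec_\dashv(y\succ_\perp z)=\alpha(x)\prec_\dashv(y\succ_\vdash z)=\alpha(x)\prec_\dashv(y\succ_\dashv z)$. A Hom-triassociative algebra is $(D,\perp,\vdash,\dashv,\alpha)$ with three bilinear operations and $\alpha$ linear such that: $(D,\vdash,\dashv,\alpha)$ is Hom-diassociative, i.e. $(x\dashv y)\dashv\alpha(z)=\alpha(x)\dashv(y\dashv z)$, $(x\dashv y)\dashv\alpha(z)=\alpha(x)\dashv(y\vdash z)$,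 $(x\vdash y)\dashv\alpha(z)=\alpha(x)\vdash(y\dashv z)$, $(x\dashv y)\vdash\alpha(z)=\alpha(x)\vdash(y\vdash z)$, $(x\vdash y)\vdash\alpha(z)=\alpha(x)\vdash(y\vdash z)$; $(D,\perp,\alpha)$ is Hom-associative, i.e. $(x\perp y)\perp\alpha(z)=\alpha(x)\perp(y\perp z)$; and for all $x,y,z$: $(x\dashv y)\dashv\alpha(z)=\alpha(x)\dashv(y\perp z)$; $(x\vdash y)\perp\alpha(z)=\alpha(x)\vdash(y\perp z)$; $(x\perp y)\dashv\alpha(z)=\alpha(x)\perp(y\dashv z)$; $(x\perp y)\vdash\alpha(z)=\alpha(x)\vdash(y\vdash z)$; $(x\dashv y)\perp\alpha(z)=\alpha(x)\perp(y\vdash z)$. *)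

From HB Require Import structures.
From mathcomp Require Import all_boot all_order all_algebra.
Set Implicit Arguments. Unset Strict Implicit. Unset Printing Implicit Defensive.
Import GRing.Theory.
Local Open Scope ring_scope.

Section HomAlgebras.
Variables (K : fieldType) (V : lmodType K).

Definition bilinear_op (f : V -> V -> V) : Prop :=
  (forall (a : K) (x y z : V), f (a *: x + y) z = a *: f x z + f y z) /\
  (forall (a : K) (x y z : V), f z (a *: x + y) = a *: f z x + f z y).

Definition linear_map (al : V -> V) : Prop :=
  forall (a : K) (x y : V), al (a *: x + y) = a *: al x + al y.

Definition HomDendriform (l r : V -> V -> V) (al : V -> V) : Prop :=
  (bilinear_op l /\ bilinear_op r /\ linear_map al /\ forall x y z, (l (al x) (l y z + r y z) = l (l x y) (al z) /\ r (al x) (l y z) = l (r x y) (al z) /\ r (al x) (r y z) = r (l x y + r x y) (al z))).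

(* lv = prec_vdash, ld = prec_dashv, rv = succ_vdash, rd = succ_dashv *)
Definition HomQuadriDendriform (lv ld rv rd : V -> V -> V) (al : V -> V) : Prop :=
  (bilinear_op lv /\ bilinear_op ld /\ bilinear_op rv /\ bilinear_op rd /\ linear_map al /\ forall x y z, ( lv (lv x y) (al z) = lv (ld x y) (al z) /\
               lv (ld x y) (al z) = lv (al x) (lv y z + rv y z) /\ lv (rv x y) (al z) = lv (rd x y) (al z) /\
               lv (rd x y) (al z) = rv (al x) (lv y z) /\ rv (al x) (rv y z) = rv (lv x y + rv x y) (al z) /\
               rv (lv x y + rv x y) (al z) = rv (ld x y + rd x y) (al z) /\ rv (al x) (rv y z) = rv (ld x y + rv x y) (al z) /\
               rv (ld x y + rv x y) (al z) = rv (lv x y + rd x y) (al z) /\ ld (lv x y) (al z) = lv (al x) (ld y z + rd y z) /\ ld (rv x y) (al z) = rv (al x) (ld y z) /\ rv (al x) (rd y z) = rd (lv x y + rv x y) (al z) /\ ld (ld x y) (al z) = ld (al x) (lv y z + rv y z) /\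
               ld (al x) (lv y z + rv y z) = ld (al x) (ld y z + rd y z) /\ ld (ld x y) (al z) = ld (al x) (lv y z + rd y z) /\
               ld (al x) (lv y z + rd y z) = ld (al x) (ld y z + rv y z) /\ ld (rd x y) (al z) = rd (al x) (lv y z) /\
                rd (al x) (lv y z) = rd (al x) (ld y z) /\ rd (al x) (rv y z) = rd (al x) (rd y z) /\
                rd (al x) (rd y z) = rd (ld x y + rd x y) (al z))).

(* lp = prec_perp, rp = succ_perp *)
Definition HomSixDendriform (lp rp lv ld rv rd : V -> V -> V) (al : V -> V) : Prop :=
  (HomDendriform lp rp al /\ HomQuadriDendriform lv ld rv rd al /\ forall x y z, ( lp (lv x y) (al z) = lv (al x) (lp y z + rp y z) /\ lp (rv x y) (al z) = rv (al x) (lp y z) /\ rv (al x) (rp y z) = rp (lv x y + rv x y) (al z) /\ lp (ld x y) (al z) = lp (al x) (lv y z + rv y z) /\ lp (rd x y) (al z) = rp (al x) (lv y z) /\ rp (al x) (rv y z) = rp (ld x y + rd x y) (al z) /\ ld (lp x y) (al z) = lp (al x) (ld y z + rd y z) /\ ld (rp x y) (al z) = rp (al x) (ld y z) /\ ( rp (al x) (rd y z) = rd (lp x y + rp x y) (al z) /\ lv (lp x y) (al z) = lv (lv x y) (al z) /\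
                lv (lv x y) (al z) = lv (ld x y) (al z) /\ lv (rp x y) (al z) = lv (rv x y) (al z) /\
                lv (rv x y) (al z) = lv (rd x y) (al z) /\ rv (lp x y) (al z) = rv (lv x y) (al z) /\
                rv (lv x y) (al z) = rv (ld x y) (al z) /\ ( rv (rp x y) (al z) = rv (rv x y) (al z) /\
                    rv (rv x y) (al z) = rv (rd x y) (al z) /\ ld (al x) (lp y z) = ld (al x) (lv y z) /\
                ld (al x) (lv y z) = ld (al x) (ld y z) /\ rd (al x) (lp y z) = rd (al x) (lv y z) /\
                rd (al x) (lv y z) = rd (al x) (ld y z) /\ rd (al x) (rp y z) = rd (al x) (rv y z) /\
                rd (al x) (rv y z) = rd (al x) (rd y z) /\ ld (al x) (rp y z) = ld (al x) (rv y z) /\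
                ld (al x) (rv y z) = ld (al x) (rd y z))))).

(* vd = vdash, dv = dashv *)
Definition HomDiassociative (vd dv : V -> V -> V) (al : V -> V) : Prop :=
  (bilinear_op vd /\ bilinear_op dv /\ linear_map al /\ forall x y z, (dv (dv x y) (al z) = dv (al x) (dv y z) /\ dv (dv x y) (al z) = dv (al x) (vd y z) /\ dv (vd x y) (al z) = vd (al x) (dv y z) /\ vd (dv x y) (al z) = vd (al x) (vd y z) /\ vd (vd x y) (al z) = vd (al x) (vd y z))).

Definition HomAssociative (p : V -> V -> V) (al : V -> V) : Prop :=
  (bilinear_op p /\ linear_map al /\ forall x y z, p (p x y) (al z) = p (al x) (p y z)).

Definition HomTriassociative (p vd dv : V -> V -> V) (al : V -> V) : Prop :=
  (HomDiassociative vd dv al /\ HomAssociative p al /\ forall x y z, (dv (dv x y) (al z) = dv (al x) (p y z) /\ p (vd x y) (al z) = vd (al x) (p y z) /\ dv (p x y) (al z) = p (al x) (dv y z) /\ vd (p x y) (al z) = vd (al x) (vd y z) /\ p (dv x y) (al z) = p (al x) (vd y z))).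

End HomAlgebras.

From HB Require Import structures.
From mathcomp Require Import all_boot all_order all_algebra.
Set Implicit Arguments.
Unset Strict Implicit.
Unset Printing Implicit Defensive.
Import GRing.Theory.
Local Open Scope ring_scope.

(* Every Hom-triassociative axiom, once both sides are expanded by
   bilinearity, is a sum of terms that the six-dendriform axioms identify
   pairwise: the dendriform part splits Hom-associativity of [perp], the
   quadri-dendriform part splits the Hom-diassociative axioms of [vdash] and
   [dashv], and (S1)-(S17) split the five mixed axioms. *)

Section BilinearOperations.
Variables (K : fieldType) (V : lmodType K).
Implicit Types f g : V -> V -> V.

Lemma bilinear_opDl f (fB : bilinear_op f) x y z : f (x + y) z = f x z + f y z.
Proof. by case: fB => fl _; rewrite -[x]scale1r fl !scale1r. Qed.

Lemma bilinear_opDr f (fB : bilinear_op f) x y z : f z (x + y) = f z x + f z y.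
Proof. by case: fB => _ fr; rewrite -[x]scale1r fr !scale1r. Qed.

Lemma bilinear_op_add f g :
  bilinear_op f -> bilinear_op g -> bilinear_op (fun x y => f x y + g x y).
Proof.
by case=> fl fr [gl gr]; split=> a x y z;
  rewrite ?fl ?gl ?fr ?gr scalerDr addrACA.
Qed.

End BilinearOperations.

Section SumsOfDendriformOperations.
Variables (K : fieldType) (V : lmodType K).
Variables (lp rp lv ld rv rd : V -> V -> V) (al : V -> V).

Local Notation perp := (fun x y => lp x y + rp x y).
Local Notation vdash := (fun x y => lv x y + rv x y).
Local Notation dashv := (fun x y => ld x y + rd x y).

Lemma HomDendriform_sum_assoc : HomDendriform lp rp al -> HomAssociative perp al.
Proof.
case=> Blp [Brp [Lal D]]; split; first exact: bilinear_op_add.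
split=> // x y z.
have [D1 [D2 D3]] := D x y z.
have E := (bilinear_opDl Blp, bilinear_opDl Brp, bilinear_opDr Blp,
  bilinear_opDr Brp).
rewrite !E in D1 D3 *.
by rewrite -D3 -D1 -D2 !addrA.
Qed.

Lemma HomQuadriDendriform_sum_diassoc :
  HomQuadriDendriform lv ld rv rd al -> HomDiassociative vdash dashv al.
Proof.
case=> Blv [Bld [Brv [Brd [Lal Q]]]].
split; first exact: bilinear_op_add.
split; first exact: bilinear_op_add.
split=> // x y z.
have [Q1a [Q1b [Q2a [Q2b [Q3a [Q3b [_ [_ [Q5 [Q6 [Q7 [Q8a [Q8b [_ [_
  [Q10a [Q10b [Q11a Q11b]]]]]]]]]]]]]]]]]] := Q x y z.
have E := (bilinear_opDl Blv, bilinear_opDl Bld, bilinear_opDl Brv,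
  bilinear_opDl Brd, bilinear_opDr Blv, bilinear_opDr Bld, bilinear_opDr Brv,
  bilinear_opDr Brd).
rewrite !E in Q1b Q3a Q3b Q5 Q7 Q8a Q8b Q11a Q11b *.
split; first by rewrite -Q11b Q8a Q8b Q10a Q10b !addrA.
split; first by rewrite -Q11b -Q11a Q8a Q10a !addrA.
split; first by rewrite -Q7 Q5 Q6 !addrA.
split; first by rewrite -Q3b -Q3a Q1b Q2b !addrA.
by rewrite -Q3a Q1a Q1b Q2a Q2b !addrA.
Qed.

Lemma HomSixDendriform_sum_compat :
  HomSixDendriform lp rp lv ld rv rd al ->
  forall x y z,
    dashv (dashv x y) (al z) = dashv (al x) (perp y z) /\
    perp (vdash x y) (al z) = vdash (al x) (perp y z) /\
    dashv (perp x y) (al z) = perp (al x) (dashv y z) /\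
    vdash (perp x y) (al z) = vdash (al x) (vdash y z) /\
    perp (dashv x y) (al z) = perp (al x) (vdash y z).
Proof.
case=> [[Blp [Brp _]] [[Blv [Bld [Brv [Brd [_ Q]]]]] S]] x y z /=.
have [Q1a [Q1b [Q2a [Q2b [Q3a [_ [_ [_ [_ [_ [_ [Q8a [_ [_ [_
  [Q10a [_ [Q11a Q11b]]]]]]]]]]]]]]]]]] := Q x y z.
have [S1 [S2 [S3 [S4 [S5 [S6 [S7 [S8 [S9 [S10a [_ [S11a [_ [S12a [_
  [S13a [_ [S14a [_ [S15a [_ [S16a [_ [S17a _]]]]]]]]]]]]]]]]]]]]]]]] := S x y z.
have E := (bilinear_opDl Blp, bilinear_opDl Brp, bilinear_opDl Blv,
  bilinear_opDl Bld, bilinear_opDl Brv, bilinear_opDl Brd,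
  bilinear_opDr Blp, bilinear_opDr Brp, bilinear_opDr Blv, bilinear_opDr Bld,
  bilinear_opDr Brv, bilinear_opDr Brd).
rewrite !E in Q1b Q3a Q8a Q11a Q11b S1 S3 S4 S6 S7 S9 *.
split; first by rewrite -Q11b -Q11a Q8a Q10a S14a S17a S15a S16a !addrA.
split; first by rewrite -S3 S1 S2 !addrA.
split; first by rewrite -S9 S7 S8 !addrA.
split; first by rewrite S12a S13a -Q3a S10a Q1a Q1b S11a Q2a Q2b !addrA.
by rewrite -S6 S4 S5 !addrA.
Qed.

End SumsOfDendriformOperations.

Theorem proposition4p7 (K : fieldType) (V : lmodType K)
    (hchar : [pchar K] =i pred0)
    (lp rp lv ld rv rd : V -> V -> V) (al : V -> V) :
  HomSixDendriform lp rp lv ld rv rd al ->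
  HomTriassociative (fun x y => lp x y + rp x y)
                    (fun x y => lv x y + rv x y)
                    (fun x y => ld x y + rd x y) al.
Proof.
move=> six; have [dend [quadri _]] := six.
split; first exact: HomQuadriDendriform_sum_diassoc.
split; first exact: HomDendriform_sum_assoc.
exact: HomSixDendriform_sum_compat.
Qed.
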